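(* For any strategy profile $g$, any player $i$, any $t$, any $(a_{1:t-1},x^i_{1:t},a^i_t)$ of positive probability under $g$, and any $(\tilde x_t,\tilde a_t)\in\mathcal X\times\mathcal A$, $$P^g(X_t=\tilde x_t,A_t=\tilde a_t\mid a_{1:t-1},x^i_{1:t},a^i_t)=\mathbf 1\{\tilde x^i_t=x^i_t,\tilde a^i_t=a^i_t\}\,P^{g^{-i}}(X^{-i}_t=\tilde x^{-i}_t,A^{-i}_t=\tilde a^{-i}_t\mid a_{1:t-1}),$$ so this conditional probability depends on the private history only through $x^i_t$, and on the profile only through $g^{-i}$.
   Context: Model: players $\mathcal N=\{1,\dots,N\}$, horizon $\mathcal T=\{1,\dots,T\}$, finite type sets $\mathcal X^i$ and action sets $\mathcal A^i$, $\mathcal X=\times_i\mathcal X^i$, $\mathcal A=\times_i\mathcal A^i$. Types evolve as $P(x_1)=\prod_iQ^i_1(x^i_1)$ and $P(x_{t+1}\mid x_{1:t},a_{1:t})=\prod_iQ^i_{t+1}(x^i_{t+1}\mid x^i_t,a_t)$ for known kernels (each may depend on the full action profile). Player $i$ privately observes its own types and all actions are public; a strategy $g^i$ specifies $g^i_t(\cdot\mid a_{1:t-1},x^i_{1:t})\in\mathcal P(\mathcal A^i)$, and players randomize independently given their information. $P^g$ denotes probability under profile $g$; $-i$ denotes all players except $i$; $P^{g^{-i}}(\cdot\mid a_{1:t-1})$ denotes a conditional probability of the other players' current types and actions given the public history which depends only on $g^{-i}$. *)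

From HB Require Import structures.
From mathcomp Require Import all_boot all_order all_algebra.
Set Implicit Arguments. Unset Strict Implicit. Unset Printing Implicit Defensive.
Import Order.TTheory GRing.Theory Num.Theory.
Local Open Scope ring_scope.

Section Game.
Variables (R : realFieldType) (N : nat) (X A : 'I_N -> finType).

Local Notation xprof := {dffun forall i : 'I_N, X i}.
Local Notation aprof := {dffun forall i : 'I_N, A i}.

(* Q1 i x = Q^i_1(x);  Qk s i x a x' = Q^i_s(x' | x, a)  (s >= 2) *)
Definition init_kernel := forall i : 'I_N, X i -> R.
Definition trans_kernel := nat -> forall i : 'I_N, X i -> aprof -> X i -> R.
(* g i s ah xh ai = g^i_s(ai | a_{1:s-1} = ah, x^i_{1:s} = xh) *)
Definition strategy_profile :=
  forall i : 'I_N, nat -> seq aprof -> seq (X i) -> A i -> R.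

Definition kernels_ok (Q1 : init_kernel) (Q : trans_kernel) : Prop :=
  (forall i x, 0 <= Q1 i x) /\ (forall i, \sum_(x : X i) Q1 i x = 1) /\
  (forall s i x a x', 0 <= Q s i x a x') /\
  (forall s i x a, \sum_(x' : X i) Q s i x a x' = 1).

Definition strategy_ok (g : strategy_profile) : Prop :=
  (forall i s ah xh ai, 0 <= g i s ah xh ai) /\
  (forall i s ah xh, \sum_(ai : A i) g i s ah xh ai = 1).

Unset Implicit Arguments.
Variables (Q1 : init_kernel) (Q : trans_kernel).
Set Implicit Arguments.

(* trajectories of the first t stages: (x_1..x_t, a_1..a_t); index s : 'I_t is time s+1 *)
Definition traj (t : nat) := (t.-tuple xprof * t.-tuple aprof)%type.

(* P(x_{s+1} | x_{1:s}, a_{1:s}) = prod_i Q^i_{s+1}(x^i_{s+1} | x^i_s, a_s) *)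
Definition type_step (t : nat) (tr : traj t) (s : 'I_t) : R :=
  let x := tnth tr.1 s in
  if (s == 0 :> nat) then \prod_(i < N) Q1 i (x i)
  else let xp := nth x tr.1 s.-1 in
       let ap := nth (tnth tr.2 s) tr.2 s.-1 in
       \prod_(i < N) Q s.+1 i (xp i) ap (x i).

(* players randomize independently given own information *)
Definition action_step (g : strategy_profile) (t : nat) (tr : traj t) (s : 'I_t) : R :=
  \prod_(i < N) g i s.+1 (take s tr.2) [seq fun_of_fin y i | y <- take s.+1 tr.1]
                  (tnth tr.2 s i).

Definition law (g : strategy_profile) (t : nat) (tr : traj t) : R :=
  \prod_(s < t) (type_step tr s * action_step g tr s).

Definition Pr (g : strategy_profile) (t : nat) (E : pred (traj t)) : R :=
  \sum_(tr : traj t | E tr) law g tr.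

Definition condPr (g : strategy_profile) (t : nat) (E C : pred (traj t)) : R :=
  Pr g (predI E C) / Pr g C.

(* the element at time t (1-based) of s exists and satisfies p *)
Definition at_time {T : Type} (s : seq T) (t : nat) (p : T -> bool) : bool :=
  [seq p y | y <- drop t.-1 s] == [:: true].

Definition pub_event (t : nat) (ah : seq aprof) : pred (traj t) :=
  fun tr => take t.-1 tr.2 == ah.

Definition priv_event (t : nat) (i : 'I_N) (ah : seq aprof) (xh : seq (X i))
    (ai : A i) : pred (traj t) :=
  fun tr => [&& take t.-1 tr.2 == ah,
               [seq fun_of_fin y i | y <- tr.1] == xh &
               at_time tr.2 t (fun a => a i == ai)].

Definition cur_event (t : nat) (xt : xprof) (acur : aprof) : pred (traj t) :=
  fun tr => at_time tr.1 t (fun x => x == xt) && at_time tr.2 t (fun a => a == acur).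

Definition others_event (t : nat) (i : 'I_N) (xt : xprof) (acur : aprof)
    : pred (traj t) :=
  fun tr => at_time tr.1 t (fun x => [forall j, (j != i) ==> (x j == xt j)]) &&
            at_time tr.2 t (fun a => [forall j, (j != i) ==> (a j == acur j)]).

End Game.

Notation xprof X := {dffun forall i, X i}.
Notation aprof A := {dffun forall i, A i}.

Arguments pub_event {N X A} t ah _.
Arguments priv_event {N X A} t i ah xh ai _.
Arguments cur_event {N X A} t xt acur _.
Arguments others_event {N X A} t i xt acur _.

From HB Require Import structures.
From mathcomp Require Import all_boot all_order all_algebra zify.
Import Order.TTheory GRing.Theory Num.Theory.
Set Implicit Arguments. Unset Strict Implicit. Unset Printing Implicit Defensive.

(* Exchange argument.  Splice two trajectories a, b that share the public history
   a_{1:t-1}: take player i's types and actions from one and everybody else's from the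
   other.  The law factors over players, and player j's factor depends only on j's own
   types and actions and on the public history; hence, when g and g' differ only at i,
   P^g(a) P^{g'}(b) = P^{g'}(b_i, a_{-i}) P^g(a_i, b_{-i}).  This pair swap is an
   involution, so summing over pairs turns pointwise event identities into
   P^g(E1) P^{g'}(E2) = P^{g'}(E3) P^g(E4), the cross-multiplied form of both claims. *)

Section AtTime.
Variables (T : Type) (s : seq T) (t : nat).

Lemma at_timeE (p : pred T) : at_time s t p = (drop t.-1 [seq p y | y <- s] == [:: true]).
Proof. by rewrite /at_time map_drop. Qed.

Lemma eq_at_time (p q : pred T) : p =1 q -> at_time s t p = at_time s t q.
Proof. by move=> pq; rewrite /at_time (eq_map pq). Qed.

Lemma at_timeI (p q : pred T) :
  at_time s t (fun y => p y && q y) = at_time s t p && at_time s t q.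
Proof.
rewrite /at_time; case: (drop t.-1 s) => [|y [|y' s']] //=.
  by rewrite !eqseq_cons !andbT !eqb_id.
by rewrite !eqseq_cons !andbF.
Qed.

Lemma at_time_eq (U : eqType) (f : T -> U) z :
  at_time s t (fun y => f y == z) = (drop t.-1 [seq f y | y <- s] == [:: z]).
Proof.
rewrite /at_time -map_drop; case: (drop t.-1 s) => [|y [|y' s']] //=.
  by rewrite !eqseq_cons !andbT eqb_id.
by rewrite !eqseq_cons !andbF.
Qed.

Lemma at_time_exists (p : pred T) : at_time s t p -> exists y, p y.
Proof.
rewrite /at_time; case: (drop t.-1 s) => [|y [|y' s']] //=.
  by rewrite eqseq_cons andbT eqb_id => py; exists y.
by rewrite !eqseq_cons andbF.
Qed.

End AtTime.

Section Splice.
Variables (N : nat) (i : 'I_N) (T : 'I_N -> finType).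
Local Notation prof := {dffun forall j, T j}.

Definition splice (f f' : prof) : prof := [ffun j => if j == i then f j else f' j].

Definition eq_off (f h : prof) : bool := [forall j, (j != i) ==> (f j == h j)].

Lemma spliceE f f' j : splice f f' j = if j == i then f j else f' j.
Proof. by rewrite ffunE. Qed.

Lemma splicexx f : splice f f = f.
Proof. by apply/ffunP => j; rewrite spliceE if_same. Qed.

Lemma splice_swapK f f' : splice (splice f f') (splice f' f) = f.
Proof. by apply/ffunP => j; rewrite !spliceE; case: (j == i). Qed.

Lemma eq_off_splice f f' h : eq_off (splice f f') h = eq_off f' h.
Proof. by apply: eq_forallb => j; rewrite spliceE; case: (j == i). Qed.

Lemma eq_prof_split (f h : prof) : (f == h) = (f i == h i) && eq_off f h.
Proof.
apply/eqP/andP => [<-|[/eqP f_i /forallP f_off]].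
  by split=> //; apply/forallP => j; apply/implyP.
by apply/ffunP => j; case: (eqVneq j i) => [->|j_i] //; apply/eqP/(implyP (f_off j)).
Qed.

Definition splices (u v : seq prof) : seq prof :=
  [seq splice p.1 p.2 | p <- zip u v].

Lemma take_splices n u v : take n (splices u v) = splices (take n u) (take n v).
Proof.
rewrite /splices; elim: u v n => [|f u IH] [|f' v] [|n] //=.
by rewrite IH.
Qed.

Lemma splicesxx u : splices u u = u.
Proof. by rewrite /splices; elim: u => //= f u ->; rewrite splicexx. Qed.

Lemma splices_swapK u v : size u = size v -> splices (splices u v) (splices v u) = u.
Proof.
rewrite /splices; elim: u v => [|f u IH] [|f' v] //= [/IH ->].
by rewrite splice_swapK.
Qed.

Lemma map_splices_l (B : Type) (p : prof -> B) u v :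
  (forall f f', p (splice f f') = p f) -> size u = size v ->
  [seq p y | y <- splices u v] = [seq p y | y <- u].
Proof.
move=> p_l; rewrite /splices; elim: u v => [|f u IH] [|f' v] //= [/IH ->].
by rewrite p_l.
Qed.

Lemma map_splices_r (B : Type) (p : prof -> B) u v :
  (forall f f', p (splice f f') = p f') -> size u = size v ->
  [seq p y | y <- splices u v] = [seq p y | y <- v].
Proof.
move=> p_r; rewrite /splices; elim: u v => [|f u IH] [|f' v] //= [/IH ->].
by rewrite p_r.
Qed.

Lemma coord_splices (j : 'I_N) (u v : seq prof) : size u = size v ->
  [seq fun_of_fin y j | y <- splices u v] =
  [seq fun_of_fin y j | y <- if j == i then u else v].
Proof.
case: (eqVneq j i) => [->|j_i].
  by apply: map_splices_l => f f'; rewrite spliceE eqxx.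
by apply: map_splices_r => f f'; rewrite spliceE (negbTE j_i).
Qed.

Lemma at_time_splices_l t (p : pred prof) u v :
  (forall f f', p (splice f f') = p f) -> size u = size v ->
  at_time (splices u v) t p = at_time u t p.
Proof. by move=> p_l uv; rewrite !at_timeE map_splices_l. Qed.

Lemma at_time_splices_r t (p : pred prof) u v :
  (forall f f', p (splice f f') = p f') -> size u = size v ->
  at_time (splices u v) t p = at_time v t p.
Proof. by move=> p_r uv; rewrite !at_timeE map_splices_r. Qed.

End Splice.

Lemma eq_nth_coord (N : nat) (Y : 'I_N -> finType) (u u' : seq {dffun forall j, Y j})
    (j : 'I_N) d d' k :
  [seq fun_of_fin y j | y <- u] = [seq fun_of_fin y j | y <- u'] -> (k < size u)%N ->
  nth d u k j = nth d' u' k j.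
Proof.
move=> uu' k_u; have k_u' : (k < size u')%N.
  by rewrite -(size_map (fun y => fun_of_fin y j)) -uu' size_map.
by rewrite -(nth_map d (d j) (fun y => fun_of_fin y j)) // uu' (nth_map d').
Qed.

Lemma eq_nth_take (T : Type) (u u' : seq T) n d d' k :
  take n u = take n u' -> (k < n)%N -> (k < size u')%N -> nth d u k = nth d' u' k.
Proof.
by move=> uu' k_n k_u'; rewrite -(nth_take d k_n) uu' nth_take // (set_nth_default d').
Qed.

Section Trajectories.
Variables (R : realFieldType) (N : nat) (X A : 'I_N -> finType).
Unset Implicit Arguments.
Variables (Q1 : init_kernel R X) (Q : trans_kernel R X A) (i : 'I_N).
Set Implicit Arguments.
Local Open Scope ring_scope.

Definition splice_traj t (a b : traj X A t) : traj X A t :=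
  (map_tuple (fun p => splice i p.1 p.2) (zip_tuple a.1 b.1),
   map_tuple (fun p => splice i p.1 p.2) (zip_tuple a.2 b.2)).

Lemma splice_traj1 t (a b : traj X A t) : val (splice_traj a b).1 = splices i a.1 b.1.
Proof. by []. Qed.

Lemma splice_traj2 t (a b : traj X A t) : val (splice_traj a b).2 = splices i a.2 b.2.
Proof. by []. Qed.

Lemma splice_traj_swapK t (a b : traj X A t) :
  splice_traj (splice_traj a b) (splice_traj b a) = a.
Proof.
case: a b => [a1 a2] [b1 b2]; congr pair; apply: val_inj;
  by rewrite [LHS]splices_swapK // !size_tuple.
Qed.

Definition factor (h : strategy_profile R X A) t (tr : traj X A t) (s : 'I_t) (j : 'I_N)
    : R :=
  (if (s == 0 :> nat) then Q1 j (tnth tr.1 s j)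
   else Q s.+1 j (nth (tnth tr.1 s) tr.1 s.-1 j) (nth (tnth tr.2 s) tr.2 s.-1)
          (tnth tr.1 s j)) *
  h j s.+1 (take s tr.2) [seq fun_of_fin y j | y <- take s.+1 tr.1] (tnth tr.2 s j).

Definition weight (h : strategy_profile R X A) t (tr : traj X A t) (j : 'I_N) : R :=
  \prod_(s < t) factor h tr s j.

Lemma lawE h t (tr : traj X A t) : law Q1 Q h tr = \prod_(j < N) weight h tr j.
Proof.
rewrite /law exchange_big; apply: eq_bigr => s _.
by rewrite /type_step /action_step /factor; case: (s == 0 :> nat); rewrite -big_split.
Qed.

Lemma eq_factor h t (tr tr' : traj X A t) s j :
  [seq fun_of_fin y j | y <- tr.1] = [seq fun_of_fin y j | y <- tr'.1] ->
  [seq fun_of_fin y j | y <- tr.2] = [seq fun_of_fin y j | y <- tr'.2] ->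
  take t.-1 tr.2 = take t.-1 tr'.2 ->
  factor h tr s j = factor h tr' s j.
Proof.
move=> own_x own_a pub.
have s_t : (s < t)%N := ltn_ord s.
have x_now : tnth tr.1 s j = tnth tr'.1 s j.
  by rewrite /tnth; apply: eq_nth_coord; rewrite ?size_tuple.
have a_now : tnth tr.2 s j = tnth tr'.2 s j.
  by rewrite /tnth; apply: eq_nth_coord; rewrite ?size_tuple.
have x_prev : nth (tnth tr.1 s) tr.1 s.-1 j = nth (tnth tr'.1 s) tr'.1 s.-1 j.
  by apply: eq_nth_coord; rewrite // size_tuple; lia.
have a_prev : (s != 0 :> nat) ->
    nth (tnth tr.2 s) tr.2 s.-1 = nth (tnth tr'.2 s) tr'.2 s.-1.
  by move=> s0; apply: (eq_nth_take _ _ pub); rewrite ?size_tuple; lia.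
have a_hist : take s tr.2 = take s tr'.2.
  by rewrite -(@take_takel _ s t.-1) 1?pub ?take_takel //; lia.
have x_hist : [seq fun_of_fin y j | y <- take s.+1 tr.1] =
              [seq fun_of_fin y j | y <- take s.+1 tr'.1] by rewrite !map_take own_x.
by rewrite /factor x_now a_now x_prev a_hist x_hist; case: ifPn => // /a_prev ->.
Qed.

Section SharedPublicHistory.
Variables (t : nat) (a b : traj X A t).
Hypothesis pub_ab : take t.-1 a.2 = take t.-1 b.2.

Lemma factor_splice h s j :
  factor h (splice_traj a b) s j = factor h (if j == i then a else b) s j.
Proof.
apply: eq_factor.
- by rewrite splice_traj1 coord_splices ?size_tuple //; case: (j == i).
- by rewrite splice_traj2 coord_splices ?size_tuple //; case: (j == i).
- by rewrite splice_traj2 take_splices -pub_ab splicesxx; case: (j == i).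
Qed.

Lemma weight_splice h j :
  weight h (splice_traj a b) j = weight h (if j == i then a else b) j.
Proof. by apply: eq_bigr => s _; apply: factor_splice. Qed.

End SharedPublicHistory.

Definition others_weight (h : strategy_profile R X A) t (tr : traj X A t) : R :=
  \prod_(j < N | j != i) weight h tr j.

Lemma law_split h t (tr : traj X A t) :
  law Q1 Q h tr = weight h tr i * others_weight h tr.
Proof. by rewrite lawE (bigD1 i). Qed.

Lemma law_splice h t (a b : traj X A t) : take t.-1 a.2 = take t.-1 b.2 ->
  law Q1 Q h (splice_traj a b) = weight h a i * others_weight h b.
Proof.
move=> pub_ab; rewrite law_split weight_splice // eqxx; congr (_ * _).
by apply: eq_bigr => j j_i; rewrite weight_splice // (negbTE j_i).
Qed.

Lemma others_weight_off h h' t (tr : traj X A t) :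
  (forall j, j != i -> h' j = h j) -> others_weight h' tr = others_weight h tr.
Proof. by move=> hh'; apply: eq_bigr => j j_i; rewrite /weight /factor hh'. Qed.

Lemma law_swap g g' t (a b : traj X A t) :
  (forall j, j != i -> g' j = g j) -> take t.-1 a.2 = take t.-1 b.2 ->
  law Q1 Q g a * law Q1 Q g' b =
  law Q1 Q g' (splice_traj b a) * law Q1 Q g (splice_traj a b).
Proof.
move=> gg' pub_ab; rewrite !law_splice // !law_split !(others_weight_off _ gg').
by rewrite mulrACA [RHS]mulrACA [weight g' b i * _]mulrC.
Qed.

Lemma law_ge0 h t (tr : traj X A t) :
  kernels_ok Q1 Q -> strategy_ok h -> 0 <= law Q1 Q h tr.
Proof.
move=> [Q1_ge0 [_ [Q_ge0 _]]] [h_ge0 _]; rewrite lawE.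
do 2 apply: prodr_ge0 => ? _; rewrite /factor.
by apply: mulr_ge0 => //; case: ifP.
Qed.

Lemma le_Pr h t (E F : pred (traj X A t)) :
  kernels_ok Q1 Q -> strategy_ok h -> subpred E F -> Pr Q1 Q h E <= Pr Q1 Q h F.
Proof.
move=> HQ Hh EF; rewrite /Pr [leLHS]big_mkcond [leRHS]big_mkcond.
apply: ler_sum => tr _; case: (boolP (E tr)) => [/EF -> //|_].
by case: (F tr); rewrite ?law_ge0.
Qed.

Lemma Pr_mul g g' t (E E' : pred (traj X A t)) :
  Pr Q1 Q g E * Pr Q1 Q g' E' =
  \sum_(p | E p.1 && E' p.2) law Q1 Q g p.1 * law Q1 Q g' p.2.
Proof. by rewrite /Pr mulr_suml; under eq_bigr do rewrite mulr_sumr; rewrite pair_big. Qed.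

Lemma pub_event_splice t ah (u v : traj X A t) :
  pub_event t ah u -> pub_event t ah v -> pub_event t ah (splice_traj u v).
Proof. by rewrite /pub_event splice_traj2 take_splices => /eqP -> /eqP ->; rewrite splicesxx. Qed.

Lemma pub_event_spliceE t ah (u v : traj X A t) :
  pub_event t ah (splice_traj v u) && pub_event t ah (splice_traj u v) =
  pub_event t ah u && pub_event t ah v.
Proof.
apply/andP/andP => [[vu uv]|[pu pv]]; last by split; apply: pub_event_splice.
split; [rewrite -(splice_traj_swapK u v) | rewrite -(splice_traj_swapK v u)];
  exact: pub_event_splice.
Qed.

Lemma Pr_swap g g' t ah (E1 E2 E3 E4 : pred (traj X A t)) :
  (forall j, j != i -> g' j = g j) ->
  subpred E1 (pub_event t ah) -> subpred E2 (pub_event t ah) ->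
  (forall u v, E1 (splice_traj v u) && E2 (splice_traj u v) = E3 u && E4 v) ->
  Pr Q1 Q g E1 * Pr Q1 Q g' E2 = Pr Q1 Q g' E3 * Pr Q1 Q g E4.
Proof.
move=> gg' E1_pub E2_pub E12.
pose swap (p : traj X A t * traj X A t) := (splice_traj p.2 p.1, splice_traj p.1 p.2).
have swapK : involutive swap by case=> u v; rewrite /swap /= !splice_traj_swapK.
rewrite !Pr_mul (reindex_inj (inv_inj swapK)) /=.
apply: eq_big => [[u v] //|[u v] /= /andP[/E1_pub /eqP vu /E2_pub /eqP uv]].
by rewrite law_swap ?vu ?uv // !splice_traj_swapK.
Qed.

Lemma condPr_eq_cross g g' t (E C E' C' : pred (traj X A t)) :
  Pr Q1 Q g C != 0 -> Pr Q1 Q g' C' != 0 ->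
  Pr Q1 Q g (predI E C) * Pr Q1 Q g' C' = Pr Q1 Q g' (predI E' C') * Pr Q1 Q g C ->
  condPr Q1 Q g E C = condPr Q1 Q g' E' C'.
Proof. by move=> C0 C'0 cross; apply/eqP; rewrite /condPr eqr_div // cross. Qed.

End Trajectories.

Section Events.
Variables (N : nat) (X A : 'I_N -> finType) (t : nat) (i : 'I_N).
Variables (ah : seq (aprof A)) (xh : seq (X i)) (ai : A i) (xt : xprof X) (acur : aprof A).

Definition own_history_event : pred (traj X A t) := fun tr =>
  ([seq fun_of_fin y i | y <- tr.1] == xh) && at_time tr.2 t (fun a => a i == ai).

Lemma priv_eventE tr :
  priv_event t i ah xh ai tr = pub_event t ah tr && own_history_event tr.
Proof. by []. Qed.

Lemma own_history_event_splice (u v : traj X A t) :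
  own_history_event (splice_traj i v u) = own_history_event v.
Proof.
rewrite /own_history_event splice_traj1 splice_traj2.
by rewrite map_splices_l ?at_time_splices_l ?size_tuple // => f f'; rewrite spliceE eqxx.
Qed.

Lemma others_event_splice (u v : traj X A t) :
  others_event t i xt acur (splice_traj i v u) = others_event t i xt acur u.
Proof.
rewrite /others_event splice_traj1 splice_traj2.
by rewrite !at_time_splices_r ?size_tuple // => f f'; apply: eq_off_splice.
Qed.

Lemma cur_eventE tr : cur_event t xt acur tr =
  [&& at_time tr.1 t (fun x => x i == xt i), at_time tr.2 t (fun a => a i == acur i)
    & others_event t i xt acur tr].
Proof.
rewrite /cur_event /others_event.
rewrite (eq_at_time _ _ (fun x => eq_prof_split i x xt)).
rewrite (eq_at_time _ _ (fun a => eq_prof_split i a acur)) !at_timeI.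
by rewrite andbACA !andbA.
Qed.

Lemma cur_event_splice (u v : traj X A t) :
  cur_event t xt acur (splice_traj i v u) =
  [&& at_time v.1 t (fun x => x i == xt i), at_time v.2 t (fun a => a i == acur i)
    & others_event t i xt acur u].
Proof.
rewrite cur_eventE others_event_splice splice_traj1 splice_traj2.
by rewrite !at_time_splices_l ?size_tuple // => f f'; rewrite spliceE eqxx.
Qed.

Lemma cur_priv_consistent tr :
  cur_event t xt acur tr -> priv_event t i ah xh ai tr ->
  (drop t.-1 xh == [:: xt i]) && (acur i == ai).
Proof.
rewrite cur_eventE => /and3P[x_now a_now _] /and3P[_ /eqP own_x own_a].
move: x_now; rewrite at_time_eq own_x => -> /=.
have /at_time_exists[a /andP[/eqP <- /eqP ->]] :
  at_time tr.2 t (fun a => (a i == acur i) && (a i == ai)) by rewrite at_timeI a_now.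
exact: eqxx.
Qed.

Section Consistent.
Hypothesis consistent : (drop t.-1 xh == [:: xt i]) && (acur i == ai).

Lemma own_now_of_history tr : own_history_event tr ->
  at_time tr.1 t (fun x => x i == xt i) && at_time tr.2 t (fun a => a i == acur i).
Proof.
case/andP: consistent => /eqP last_xh /eqP acur_ai /andP[/eqP own_x own_a].
by rewrite at_time_eq own_x last_xh eqxx acur_ai.
Qed.

Lemma cur_priv_splice (u v : traj X A t) :
  predI (cur_event t xt acur) (priv_event t i ah xh ai) (splice_traj i v u)
    && pub_event t ah (splice_traj i u v) =
  predI (others_event t i xt acur) (pub_event t ah) u && priv_event t i ah xh ai v.
Proof.
rewrite /= cur_event_splice !priv_eventE own_history_event_splice.
apply/idP/idP => [/andP[/andP[/and3P[_ _ others_u] /andP[vu own_v]] uv]|].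
  have /andP[pu pv] : pub_event t ah u && pub_event t ah v.
    by rewrite -(pub_event_spliceE i) vu uv.
  by rewrite others_u pu pv own_v.
case/andP=> /andP[others_u pu] /andP[pv own_v].
have /andP[vu uv] : pub_event t ah (splice_traj i v u) && pub_event t ah (splice_traj i u v).
  by rewrite pub_event_spliceE pu pv.
by case/andP: (own_now_of_history own_v) => -> ->; rewrite others_u vu own_v uv.
Qed.

End Consistent.

Lemma others_pub_splice (u v : traj X A t) :
  predI (others_event t i xt acur) (pub_event t ah) (splice_traj i v u)
    && pub_event t ah (splice_traj i u v) =
  predI (others_event t i xt acur) (pub_event t ah) u && pub_event t ah v.
Proof. by rewrite /= others_event_splice -andbA pub_event_spliceE andbA. Qed.

End Events.

Local Open Scope ring_scope.

Theorem claim4 (R : realFieldType) (N : nat) (X A : 'I_N -> finType) (T : nat)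
    (Q1 : init_kernel R X) (Q : trans_kernel R X A)
    (g : strategy_profile R X A) (i : 'I_N) (t : nat)
    (ah : seq (aprof A)) (xh : seq (X i)) (ai : A i)
    (xt : xprof X) (acur : aprof A) :
  kernels_ok Q1 Q -> strategy_ok g ->
  (1 <= t <= T)%N -> size ah = t.-1 -> size xh = t ->
  0 < Pr Q1 Q g (priv_event t i ah xh ai) ->
  condPr Q1 Q g (cur_event t xt acur) (priv_event t i ah xh ai)
    = ((drop t.-1 xh == [:: xt i]) && (acur i == ai))%:R
      * condPr Q1 Q g (others_event t i xt acur) (pub_event t ah)
  /\ (forall g' : strategy_profile R X A, strategy_ok g' ->
        (forall j, j != i -> g' j = g j) ->
        0 < Pr Q1 Q g' (pub_event t ah) ->
        condPr Q1 Q g' (others_event t i xt acur) (pub_event t ah)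
        = condPr Q1 Q g (others_event t i xt acur) (pub_event t ah)).
Proof.
move=> HQ Hg _ _ _ Ppriv.
have Ppub : 0 < Pr Q1 Q g (pub_event t ah).
  by apply: (lt_le_trans Ppriv); apply: le_Pr => // tr /andP[].
split=> [|g' _ gg' Ppub'].
  case: (boolP ((drop t.-1 xh == [:: xt i]) && (acur i == ai))) => [consistent|inconsistent].
    rewrite mul1r; apply: condPr_eq_cross; rewrite ?lt0r_neq0 //.
    apply: (Pr_swap _ _ (i := i) (ah := ah)) => // [tr /andP[_ /andP[]] //|u v].
    exact: cur_priv_splice.
  rewrite mul0r /condPr /Pr big_pred0 ?mul0r // => tr /=.
  by apply: contraNF inconsistent => /andP[]; apply: cur_priv_consistent.
apply: esym; apply: condPr_eq_cross; rewrite ?lt0r_neq0 //.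
apply: (Pr_swap _ _ (i := i) (ah := ah)) => // [tr /andP[] //|u v].
exact: others_pub_splice.
Qed.
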